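(* Let $\mathbf w_1,\dots,\mathbf w_K\in\mathbb R^d$ ($K\ge2$) and $k\in[K]$ with $\mathbf w_k\notin\operatorname{conv}(\{\mathbf w_j\}_{j\in[K]\setminus\{k\}})$. Then the problems $$\min_{\mathbf h\in\mathbb S^{d-1}}\max_{k'\ne k}\langle\mathbf w_{k'}-\mathbf w_k,\mathbf h\rangle\quad\text{and}\quad\min_{\|\mathbf h\|_2\le1}\max_{k'\ne k}\langle\mathbf w_{k'}-\mathbf w_k,\mathbf h\rangle$$ are equivalent, i.e. they have the same optimal solutions.
   Context: $\mathbb S^{d-1}$ is the unit sphere in $\mathbb R^d$; $\operatorname{conv}$ denotes convex hull. *)

From mathcomp Require Import all_boot all_order all_algebra.
From mathcomp Require Import all_classical all_reals ereal.
Set Implicit Arguments. Unset Strict Implicit. Unset Printing Implicit Defensive.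
Import Order.TTheory GRing.Theory Num.Theory.
Local Open Scope ring_scope.

Definition dotp (R : realType) (d : nat) (u v : 'rV[R]_d) : R :=
  \sum_(i < d) u ord0 i * v ord0 i.

Definition norm2 (R : realType) (d : nat) (h : 'rV[R]_d) : R :=
  Num.sqrt (dotp h h).

Definition in_conv (R : realType) (d K : nat) (P : pred 'I_K)
    (w : 'I_K -> 'rV[R]_d) (x : 'rV[R]_d) : Prop :=
  exists lam : 'I_K -> R,
    [/\ forall j, 0 <= lam j,
        forall j, ~~ P j -> lam j = 0,
        \sum_(j < K) lam j = 1 &
        x = \sum_(j < K) lam j *: w j].

(* Objective  h |-> max_{k' <> k} <w_k' - w_k, h>  (max in \bar R, finite since K >= 2). *)
Definition obj (R : realType) (d K : nat) (w : 'I_K -> 'rV[R]_d) (k : 'I_K)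
    (h : 'rV[R]_d) : \bar R :=
  \big[maxe/-oo%E]_(j < K | j != k) (dotp (w j - w k) h)%:E.

Definition is_argmin (R : realType) (d : nat) (S : 'rV[R]_d -> Prop)
    (f : 'rV[R]_d -> \bar R) (h : 'rV[R]_d) : Prop :=
  S h /\ forall h', S h' -> (f h <= f h')%E.

From mathcomp Require Import all_boot all_order all_algebra.
From mathcomp Require Import all_classical all_reals ereal.
From mathcomp Require Import lra.

(* Since w_k is not in the convex hull of the other w_j, Gordan's alternative
   gives h0 with <w_j - w_k, h0> < 0 for all j <> k, so the objective f, a
   maximum of linear forms and hence positively homogeneous, takes negative
   values.  Write a nonzero h of the ball as ||h|| u with ||u|| = 1, so that
   f h = ||h|| f u.  If m < 0 is the minimum over the sphere, then
   f h >= ||h|| m >= m (and f 0 = 0 > m); conversely a minimizer h over the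
   ball satisfies f h <= f u = f h / ||h|| with f h < 0, forcing ||h|| = 1.
   Gordan's alternative is proved by induction on the number of vectors,
   eliminating the direction found for all but the first one as in
   Fourier-Motzkin elimination. *)

Set Implicit Arguments.
Unset Strict Implicit.
Unset Printing Implicit Defensive.
Import Order.TTheory GRing.Theory Num.Theory.
Local Open Scope ring_scope.

Section PositivelyHomogeneousMin.
Variables (R : realFieldType) (V : lmodType R) (N g : V -> R).
Hypothesis N_ge0 : forall v, 0 <= N v.
Hypothesis NZ : forall t v, N (t *: v) = `|t| * N v.
Hypothesis N_eq0 : forall v, N v = 0 -> v = 0.
Hypothesis gZ : forall t v, 0 < t -> g (t *: v) = t * g v.
Hypothesis g_neg : exists v, g v < 0.

Lemma pos_homo0 : g 0 = 0.
Proof. by have := @gZ _ 0 (ltr0Sn R 1); rewrite scaler0 => ?; lra. Qed.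

Lemma N_gt0 v : v != 0 -> 0 < N v.
Proof.
by move=> v_neq0; rewrite lt_def N_ge0 andbT; apply: contra_neq v_neq0 => /N_eq0.
Qed.

Lemma N_normalize v : v != 0 -> N ((N v)^-1 *: v) = 1.
Proof.
by move=> v_neq0; rewrite NZ ger0_norm ?invr_ge0 // mulVf // gt_eqF ?N_gt0.
Qed.

Lemma pos_homo_normalize v : v != 0 -> g v = N v * g ((N v)^-1 *: v).
Proof.
move=> v_neq0; rewrite -gZ ?N_gt0 // scalerA mulfV ?scale1r //.
by rewrite gt_eqF ?N_gt0.
Qed.

Lemma sphere_min_lt0 h : (forall u, N u = 1 -> g h <= g u) -> g h < 0.
Proof.
move=> h_min; have [v gv_lt0] := g_neg.
have v_neq0 : v != 0 by apply: contraTneq gv_lt0 => ->; rewrite pos_homo0 ltxx.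
apply: (le_lt_trans (h_min _ (N_normalize v_neq0))).
by move: gv_lt0; rewrite (pos_homo_normalize v_neq0) pmulr_rlt0 ?N_gt0.
Qed.

Lemma sphere_min_ball_min h :
  (forall u, N u = 1 -> g h <= g u) -> forall v, N v <= 1 -> g h <= g v.
Proof.
move=> h_min v v_le1; have gh_lt0 := sphere_min_lt0 h_min.
have [->|v_neq0] := eqVneq v 0; first by rewrite pos_homo0 ltW.
have := h_min _ (N_normalize v_neq0); rewrite (pos_homo_normalize v_neq0).
have := N_gt0 v_neq0; nra.
Qed.

Lemma ball_min_sphere h :
  N h <= 1 -> (forall v, N v <= 1 -> g h <= g v) -> N h = 1.
Proof.
move=> h_le1 h_min.
have gh_lt0 : g h < 0 by apply: sphere_min_lt0 => u u1; rewrite h_min ?u1.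
have h_neq0 : h != 0 by apply: contraTneq gh_lt0 => ->; rewrite pos_homo0 ltxx.
have u_le1 : N ((N h)^-1 *: h) <= 1 by rewrite N_normalize.
have := h_min _ u_le1; have := pos_homo_normalize h_neq0; have := N_gt0 h_neq0.
by move=> Nh_gt0 gh_eq gh_le; apply/le_anti; rewrite h_le1 /=; nra.
Qed.

Lemma sphere_min_iff_ball_min h :
  (N h = 1 /\ forall u, N u = 1 -> g h <= g u) <->
  (N h <= 1 /\ forall v, N v <= 1 -> g h <= g v).
Proof.
split=> -[h_N h_min].
  by split; [rewrite h_N | apply: sphere_min_ball_min].
have h1 := ball_min_sphere h_N h_min.
by split=> // u u1; apply: h_min; rewrite u1.
Qed.

End PositivelyHomogeneousMin.

Section Dotp.
Variables (R : realType) (d : nat).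
Implicit Types (u v x : 'rV[R]_d) (t : R).

Lemma dotpC u v : dotp u v = dotp v u.
Proof. by apply: eq_bigr => i _; rewrite mulrC. Qed.

Lemma dotpDl u v x : dotp (u + v) x = dotp u x + dotp v x.
Proof. by rewrite /dotp -big_split; apply: eq_bigr => i _; rewrite mxE mulrDl. Qed.

Lemma dotpZl t u v : dotp (t *: u) v = t * dotp u v.
Proof. by rewrite /dotp mulr_sumr; apply: eq_bigr => i _; rewrite mxE mulrA. Qed.

Lemma dotpDr u v x : dotp u (v + x) = dotp u v + dotp u x.
Proof. by rewrite dotpC dotpDl !(dotpC u). Qed.

Lemma dotpZr t u v : dotp u (t *: v) = t * dotp u v.
Proof. by rewrite dotpC dotpZl dotpC. Qed.

Lemma dotpBl u v x : dotp (u - v) x = dotp u x - dotp v x.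
Proof. by rewrite dotpDl -scaleN1r dotpZl mulN1r. Qed.

Lemma dotpBr u v x : dotp u (v - x) = dotp u v - dotp u x.
Proof. by rewrite dotpC dotpBl !(dotpC u). Qed.

Lemma dotpp_eq0 u : (dotp u u == 0) = (u == 0).
Proof.
rewrite /dotp psumr_eq0 => [|i _]; last by rewrite -expr2 sqr_ge0.
apply/allP/eqP => [u0|-> i _]; last by rewrite mxE mul0r eqxx.
apply/matrixP => i j; rewrite (ord1 i) mxE; apply/eqP.
by rewrite -[_ == 0]orbb -mulf_eq0; apply: u0; rewrite mem_index_enum.
Qed.

Lemma dotpp_ge0 u : 0 <= dotp u u.
Proof. by apply: sumr_ge0 => i _; rewrite -expr2 sqr_ge0. Qed.

Lemma dotpp_gt0 u : u != 0 -> 0 < dotp u u.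
Proof. by rewrite lt_def dotpp_ge0 dotpp_eq0 andbT. Qed.

Lemma norm2_ge0 u : 0 <= norm2 u.
Proof. exact: sqrtr_ge0. Qed.

Lemma norm2Z t u : norm2 (t *: u) = `|t| * norm2 u.
Proof.
by rewrite /norm2 dotpZl dotpZr mulrA -expr2 sqrtrM ?sqr_ge0 // sqrtr_sqr.
Qed.

Lemma norm2_eq0 u : norm2 u = 0 -> u = 0.
Proof.
move=> /eqP; rewrite sqrtr_eq0 => /(conj (dotpp_ge0 u)) /andP.
by rewrite -eq_le eq_sym dotpp_eq0 => /eqP.
Qed.

End Dotp.

Lemma exists_ub_lt (R : realDomainType) m (x : 'I_m -> R) :
  exists s, forall j, x j < s.
Proof.
exists (1 + \big[Num.max/0]_j x j) => j.
by have : x j <= \big[Num.max/0]_j x j := le_bigmax _ _ j; lra.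
Qed.

Lemma exists_between (R : realFieldType) m (x : 'I_m -> R) (L : R) :
  (forall j, x j < L) -> exists2 s, s < L & forall j, x j < s.
Proof.
move=> x_lt; pose M := \big[Num.max/(L - 1)]_j x j.
have M_lt : M < L by apply: bigmax_lt => [|j _]; rewrite ?x_lt ?ltrBlDr ?ltrDl.
exists ((M + L) / 2) => [|j]; first lra.
by have : x j <= M := le_bigmax _ _ j; lra.
Qed.

Section Gordan.
Variables (R : realType) (d : nat).

Definition has_neg_direction m (a : 'I_m -> 'rV[R]_d) :=
  exists h, forall j, dotp (a j) h < 0.

Definition nonneg_dependent m (a : 'I_m -> 'rV[R]_d) :=
  exists mu : 'I_m -> R,
    [/\ forall j, 0 <= mu j, 0 < \sum_j mu j & \sum_j mu j *: a j = 0].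

Lemma nonneg_dependent_cons m (a : 'I_m.+1 -> 'rV[R]_d) t (mu : 'I_m -> R) :
  0 <= t -> (forall j, 0 <= mu j) -> 0 < t + \sum_j mu j ->
  t *: a ord0 + \sum_j mu j *: a (lift ord0 j) = 0 -> nonneg_dependent a.
Proof.
move=> t_ge0 mu_ge0 sum_gt0 comb.
exists (fun j => if unlift ord0 j is Some j' then mu j' else t).
split; first by move=> j; case: unliftP.
  by rewrite big_ord_recl unlift_none; under eq_bigr do rewrite liftK.
by rewrite big_ord_recl unlift_none; under eq_bigr do rewrite liftK.
Qed.

Section GordanStep.
Variables (m : nat) (a : 'I_m.+1 -> 'rV[R]_d) (h0 : 'rV[R]_d).
Hypothesis h0_neg : forall j, dotp (a (lift ord0 j)) h0 < 0.

Lemma neg_direction_orth :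
  dotp (a ord0) h0 = 0 -> a ord0 != 0 -> has_neg_direction a.
Proof.
move=> orth a0_neq0.
have [s s_gt] := exists_ub_lt (fun j => dotp (a (lift ord0 j)) (a ord0) /
                                        dotp (a (lift ord0 j)) h0).
exists (s *: h0 - a ord0) => j; rewrite dotpBr dotpZr.
case: (unliftP ord0 j) => [j' ->|->].
  by move: (s_gt j'); rewrite ltr_ndivrMr ?h0_neg // => ?; lra.
by rewrite orth mulr0 sub0r oppr_lt0 dotpp_gt0.
Qed.

(* One Fourier-Motzkin step: every [elim_h0 j] is orthogonal to [h0]. *)
Let elim_h0 j := dotp (a ord0) h0 *: a (lift ord0 j)
                 - dotp (a (lift ord0 j)) h0 *: a ord0.

Lemma neg_direction_elim :
  0 < dotp (a ord0) h0 -> has_neg_direction elim_h0 -> has_neg_direction a.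
Proof.
move=> a0_pos [g g_neg].
have sep j : dotp (a (lift ord0 j)) g / - dotp (a (lift ord0 j)) h0 <
             - dotp (a ord0) g / dotp (a ord0) h0.
  have := g_neg j; have := h0_neg j; rewrite /elim_h0 dotpBl !dotpZl => ? ?.
  by rewrite ltr_pdivrMr ?oppr_gt0 // mulrAC ltr_pdivlMr //; nra.
have [s s_lt s_gt] := exists_between sep.
exists (g + s *: h0) => j; rewrite dotpDr dotpZr.
case: (unliftP ord0 j) => [j' ->|->].
  by move: (s_gt j'); rewrite ltr_pdivrMr ?oppr_gt0 ?h0_neg // => ?; lra.
by move: s_lt; rewrite ltr_pdivlMr // => ?; lra.
Qed.

Lemma nonneg_dependent_elim :
  0 < dotp (a ord0) h0 -> nonneg_dependent elim_h0 -> nonneg_dependent a.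
Proof.
move=> a0_pos [mu [mu_ge0 mu_pos comb]].
pose t := \sum_j mu j * - dotp (a (lift ord0 j)) h0.
have t_ge0 : 0 <= t.
  by apply: sumr_ge0 => j _; rewrite mulr_ge0 // oppr_ge0 ltW.
apply: (@nonneg_dependent_cons _ _ t (fun j => dotp (a ord0) h0 * mu j)) => //.
- by move=> j; rewrite mulr_ge0 // ltW.
- by rewrite -mulr_sumr ltr_wpDl // mulr_gt0.
rewrite -[RHS]comb scaler_suml -big_split /=; apply: eq_bigr => j _.
by rewrite /elim_h0 scalerBr !scalerA addrC mulrN scaleNr [_ * mu j]mulrC.
Qed.

End GordanStep.

Theorem gordan m (a : 'I_m -> 'rV[R]_d) :
  has_neg_direction a \/ nonneg_dependent a.
Proof.
elim: m a => [|m IH] a; first by left; exists 0 => -[].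
have [[h0 h0_neg]|[mu [mu_ge0 mu_pos comb]]] := IH (fun j => a (lift ord0 j));
  last first.
  by right; apply: (@nonneg_dependent_cons _ _ 0 mu); rewrite ?scale0r ?add0r.
have [a0_eq0|a0_neq0] := eqVneq (a ord0) 0.
  right; apply: (@nonneg_dependent_cons _ _ 1 (fun=> 0)) => //.
    by rewrite big1 ?addr0.
  by rewrite a0_eq0 scaler0 add0r big1 // => j _; rewrite scale0r.
case: (ltrgtP (dotp (a ord0) h0) 0) => [neg|pos|orth].
- by left; exists h0 => j; case: (unliftP ord0 j) => [j' ->|->].
- have [|] := IH (fun j => dotp (a ord0) h0 *: a (lift ord0 j)
                           - dotp (a (lift ord0 j)) h0 *: a ord0).
    by left; apply: neg_direction_elim.
  by right; apply: nonneg_dependent_elim.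
- by left; apply: neg_direction_orth.
Qed.

End Gordan.

Lemma in_conv_of_nonneg_dependent (R : realType) d n (w : 'I_n -> 'rV[R]_d)
    (k : 'I_n) :
  nonneg_dependent (fun j : 'I_n.-1 => w (lift k j) - w k) ->
  in_conv (fun j => j != k) w (w k).
Proof.
move=> [mu [mu_ge0 mu_pos comb]]; set S := \sum_j mu j in mu_pos.
have S_neq0 : S != 0 by rewrite gt_eqF.
exists (fun j => if unlift k j is Some j' then mu j' / S else 0); split.
- by move=> j; case: unliftP => // j' _; rewrite divr_ge0 // ltW.
- by move=> j; rewrite negbK => /eqP ->; rewrite unlift_none.
- rewrite (bigD1_ord k) //= unlift_none add0r.
  by under eq_bigr do rewrite liftK; rewrite -mulr_suml mulfV.
rewrite (bigD1_ord k) //= unlift_none scale0r add0r.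
under eq_bigr do rewrite liftK mulrC -scalerA; rewrite -scaler_sumr.
move: comb; under eq_bigr do rewrite scalerBr; rewrite sumrB -scaler_suml.
by move=> /eqP; rewrite subr_eq0 => /eqP ->; rewrite scalerA mulVf ?scale1r.
Qed.

Section Objective.
Variables (R : realType) (d K : nat) (w : 'I_K -> 'rV[R]_d) (k : 'I_K).

Lemma obj_lt0 h :
  (forall j, j != k -> dotp (w j - w k) h < 0) -> (obj w k h < 0)%E.
Proof. by move=> neg; apply: bigmax_lt => // j /neg; rewrite lte_fin. Qed.

Lemma objZ t h : 0 < t -> obj w k (t *: h) = (t%:E * obj w k h)%E.
Proof.
move=> t_gt0; rewrite /obj (big_endo (fun x => t%:E * x)%E).
- by apply: eq_bigr => j _; rewrite dotpZr EFinM.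
- by move=> x y; rewrite maxe_pMr // lee_fin ltW.
by rewrite mulrNy gtr0_sg // mul1e.
Qed.

Lemma obj_fin_num (k' : 'I_K) h : k' != k -> obj w k h \is a fin_num.
Proof.
move=> k'_neq; rewrite fin_numElt; apply/andP; split.
  by apply: lt_le_trans (le_bigmax_cond (P := predC1 k) _ _ k'_neq); rewrite ltNyr.
by apply: bigmax_lt => // j _; rewrite ltry.
Qed.

End Objective.

Theorem mainTheorem13 (R : realType) (d K : nat) (w : 'I_K -> 'rV[R]_d)
    (k : 'I_K) (hK : (2 <= K)%N)
    (hnc : ~ in_conv (fun j => j != k) w (w k)) :
  forall h : 'rV[R]_d,
    is_argmin (fun h' => norm2 h' = 1) (obj w k) h <->
    is_argmin (fun h' => norm2 h' <= 1) (obj w k) h.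
Proof.
have /card_gt0P[k' k'_neq] : (0 < #|predC1 k|)%N.
  by rewrite cardC1 card_ord -ltnS (ltn_predK hK).
pose g h := fine (obj w k h).
have objE : obj w k = fun h => (g h)%:E.
  by apply/funext => h; rewrite fineK // (obj_fin_num w _ k'_neq).
have gZ t h : 0 < t -> g (t *: h) = t * g h.
  by move=> t_gt0; rewrite /g objZ // fineM // (obj_fin_num w _ k'_neq).
have g_neg : exists h0, g h0 < 0.
  have [[h0 h0_neg]|dep] := gordan (fun j : 'I_K.-1 => w (lift k j) - w k).
    exists h0; rewrite -lte_fin fineK ?(obj_fin_num w _ k'_neq) //.
    apply: obj_lt0 => j; rewrite eq_sym => /unlift_some[j' -> _].
    exact: h0_neg.
  by case: hnc; apply: in_conv_of_nonneg_dependent.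
move=> h; rewrite /is_argmin objE; setoid_rewrite lee_fin.
exact: (sphere_min_iff_ball_min (@norm2_ge0 R d) (@norm2Z R d) (@norm2_eq0 R d)
          gZ g_neg).
Qed.
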